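(* For each $s\in\{2,3,4\}$ we have $L_s(r)>0$ for all real $r\in(2,\infty)$. Furthermore, for $s\in\{3,4\}$ we also have $L_s(2)>0$.
   Context: For an integer $s\ge2$ and real $r\ge2$ (with $rs-r-s>0$), define \[ L_s(r)=L(r,s)=\frac rs\log(s-1)+(r-1)\log(r-1)-\frac{rs-r-s}{s}\log r-\frac{rs-r-s}{s(s-1)}\log(rs-r-s). \] *)

From Stdlib Require Import Reals.
Open Scope R_scope.

Definition L (s : nat) (r : R) : R :=
  let sR := INR s in
  let q := r * sR - r - sR in
  r / sR * ln (sR - 1) + (r - 1) * ln (r - 1)
  - q / sR * ln r
  - q / (sR * (sR - 1)) * ln q.

From Stdlib Require Import Reals Lra Psatz.
From Coquelicot Require Import Coquelicot.
Open Scope R_scope.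

(* Write k = s - 1 and u = r - 1, so that rs - r - s = k u - 1.  Splitting
   ln (u + 1) = ln u + ln (1 + 1/u) and ln (k u - 1) = ln k + ln u - ln (1 + 1/(k u - 1)),
   the coefficients of ln k and ln u collapse to 1/k and L_s(r) becomes
     Lred k u = (ln k + ln u)/k - (k u - 1)/s ln (1 + 1/u)
                + (k u - 1)/(s k) ln (1 + 1/(k u - 1))            (lemma L_eq_Lred).
   For s = 2 (k = 1, u > 1) positivity is immediate: ln u > 0 and ln is increasing.
   For s = 3, 4 (u >= 1) we bound each logarithm by a rational function,
     2x/(2+x) <= ln (1 + x) <= x(6+x)/(6+4x)   for x >= 0,
   both proved by the monotonicity of their difference with ln, and obtain a rational
   lower bound of Lred k u (lemma Lred_lower_bound) whose positivity for k = 2, 3 is a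
   polynomial inequality in t = u - 1 >= 0 with nonnegative coefficients. *)

Lemma nondecreasing_from_derive (f df : R -> R) (x : R) : 0 <= x ->
  (forall t, 0 <= t <= x -> is_derive f t (df t)) ->
  (forall t, 0 <= t <= x -> 0 <= df t) -> f 0 <= f x.
Proof.
intros Hx Hd Hpos.
destruct (MVT_gen f 0 x df) as [c [Hc Heq]].
- intros t Ht. rewrite Rmin_left, Rmax_right in Ht by lra. apply Hd; lra.
- intros t Ht. rewrite Rmin_left, Rmax_right in Ht by lra.
  apply derivable_continuous_pt. exists (df t). apply is_derive_Reals, Hd; lra.
- rewrite Rmin_left, Rmax_right in Hc by lra.
  assert (0 <= df c) by (apply Hpos; lra). nra.
Qed.

Lemma ln_1p_upper (x : R) : 0 <= x -> ln (1 + x) <= x * (6 + x) / (6 + 4 * x).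
Proof.
intros Hx.
assert (H := nondecreasing_from_derive
  (fun t => t * (6 + t) / (6 + 4 * t) - ln (1 + t))
  (fun t => 4 * t ^ 3 / ((6 + 4 * t) ^ 2 * (1 + t))) x Hx).
simpl in H. replace (1 + 0) with 1 in H by ring. rewrite ln_1 in H.
enough (0 <= x * (6 + x) / (6 + 4 * x) - ln (1 + x)) by lra.
eapply Rle_trans; [| apply H].
- unfold Rdiv; lra.
- intros t Ht. auto_derive; [lra | field; lra].
- intros t Ht. apply Rmult_le_pos; [nra |].
  left. apply Rinv_0_lt_compat. nra.
Qed.

Lemma ln_1p_lower (x : R) : 0 <= x -> 2 * x / (2 + x) <= ln (1 + x).
Proof.
intros Hx.
assert (H := nondecreasing_from_derive (fun t => ln (1 + t) - 2 * t / (2 + t))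
  (fun t => t ^ 2 / ((2 + t) ^ 2 * (1 + t))) x Hx).
simpl in H. replace (1 + 0) with 1 in H by ring. rewrite ln_1 in H.
enough (0 <= ln (1 + x) - 2 * x / (2 + x)) by lra.
eapply Rle_trans; [| apply H].
- unfold Rdiv; lra.
- intros t Ht. auto_derive; [lra | field; lra].
- intros t Ht. apply Rmult_le_pos; [nra |].
  left. apply Rinv_0_lt_compat. nra.
Qed.

Lemma ln_lower (u : R) : 1 <= u -> 2 * (u - 1) / (u + 1) <= ln u.
Proof.
intros Hu. replace u with (1 + (u - 1)) at 3 by ring.
replace (u + 1) with (2 + (u - 1)) by ring. apply ln_1p_lower; lra.
Qed.

Definition Lred (k u : R) : R :=
  ln k / k + ln u / k - (k * u - 1) / (k + 1) * ln (1 + / u)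
  + (k * u - 1) / (k * (k + 1)) * ln (1 + / (k * u - 1)).

Lemma L_eq_Lred (s : nat) (r : R) :
  1 < INR s -> 1 < r -> 1 < (INR s - 1) * (r - 1) ->
  L s r = Lred (INR s - 1) (r - 1).
Proof.
intros Hs Hr Hq. unfold L, Lred. cbv zeta.
set (k := INR s - 1) in *. set (u := r - 1) in *.
replace (INR s) with (k + 1) by (unfold k; ring).
replace r with (u + 1) by (unfold u; ring).
replace (u + 1 - 1) with u by ring.
replace ((u + 1) * (k + 1) - (u + 1) - (k + 1)) with (k * u - 1) by ring.
replace (k + 1 - 1) with k by ring.
assert (Hk : 0 < k) by (unfold k; lra).
assert (Hu : 0 < u) by (unfold u; lra).
assert (Hiu : 0 < / u) by (apply Rinv_0_lt_compat; lra).
assert (Hiq : 0 < / (k * u - 1)) by (apply Rinv_0_lt_compat; lra).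
assert (Eu : ln (u + 1) = ln u + ln (1 + / u)).
{ rewrite <- ln_mult by lra. f_equal. field. lra. }
assert (Eq : ln (k * u - 1) = ln k + ln u - ln (1 + / (k * u - 1))).
{ enough (ln (k * u - 1) + ln (1 + / (k * u - 1)) = ln k + ln u) by lra.
  rewrite <- !ln_mult by lra. f_equal. field. lra. }
rewrite Eu, Eq. field. lra.
Qed.

(* Case s = 2: here ln k = 0, ln u > 0 and 1 + 1/(u-1) > 1 + 1/u. *)
Lemma Lred_pos_k1 (u : R) : 1 < u -> 0 < Lred 1 u.
Proof.
intros Hu. unfold Lred. rewrite ln_1.
replace (1 * u - 1) with (u - 1) by ring.
assert (Hlnu : 0 < ln u) by (rewrite <- ln_1; apply ln_increasing; lra).
assert (Hmono : ln (1 + / u) < ln (1 + / (u - 1))).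
{ apply ln_increasing.
  - assert (0 < / u) by (apply Rinv_0_lt_compat; lra). lra.
  - apply Rplus_lt_compat_l, Rinv_lt_contravar; nra. }
assert (0 < (u - 1) / (1 + 1)) by (apply Rdiv_lt_0_compat; lra).
replace ((u - 1) / (1 * (1 + 1))) with ((u - 1) / (1 + 1)) by (field; lra).
unfold Rdiv at 1 2. nra.
Qed.

Definition Lred_bound (k c u : R) : R :=
  c / k + 2 * (u - 1) / ((u + 1) * k)
  - (k * u - 1) / (k + 1) * ((6 * u + 1) / (u * (6 * u + 4)))
  + (k * u - 1) / (k * (k + 1)) * (2 / (2 * k * u - 1)).

Lemma Lred_lower_bound (k c u : R) :
  1 < k -> 1 <= u -> c <= ln k -> Lred_bound k c u <= Lred k u.
Proof.
intros Hk Hu Hc. unfold Lred, Lred_bound.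
assert (Hku : 0 < k * u - 1) by nra.
assert (Hiu : 0 <= / u) by (left; apply Rinv_0_lt_compat; lra).
assert (Hiq : 0 < / (k * u - 1)) by (apply Rinv_0_lt_compat; lra).
assert (Hup := ln_1p_upper (/ u) Hiu).
assert (Hlow := ln_1p_lower (/ (k * u - 1)) ltac:(lra)).
replace (/ u * (6 + / u) / (6 + 4 * / u)) with ((6 * u + 1) / (u * (6 * u + 4)))
  in Hup by (field; lra).
replace (2 * / (k * u - 1) / (2 + / (k * u - 1))) with (2 / (2 * k * u - 1))
  in Hlow by (field; nra).
assert (Hlnk : c / k <= ln k / k) by (apply Rmult_le_compat_r; [left; apply Rinv_0_lt_compat |]; lra).
assert (Hlnu : 2 * (u - 1) / ((u + 1) * k) <= ln u / k).
{ replace (2 * (u - 1) / ((u + 1) * k)) with (2 * (u - 1) / (u + 1) / k) by (field; lra).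
  apply Rmult_le_compat_r; [left; apply Rinv_0_lt_compat; lra | apply ln_lower; lra]. }
assert (Hq1 : 0 <= (k * u - 1) / (k + 1)) by (apply Rdiv_le_0_compat; lra).
assert (Hq2 : 0 <= (k * u - 1) / (k * (k + 1))) by (apply Rdiv_le_0_compat; nra).
apply Rmult_le_compat_l with (r := (k * u - 1) / (k + 1)) in Hup; [| exact Hq1].
apply Rmult_le_compat_l with (r := (k * u - 1) / (k * (k + 1))) in Hlow; [| exact Hq2].
lra.
Qed.

Lemma Lred_pos_k2 (u : R) : 1 <= u -> 0 < Lred 2 u.
Proof.
intros Hu.
assert (Hln2 : 2 / 3 <= ln 2).
{ replace 2 with (1 + 1) at 2 by ring. assert (H := ln_1p_lower 1 ltac:(lra)). lra. }
apply Rlt_le_trans with (Lred_bound 2 (2 / 3) u); [| apply Lred_lower_bound; lra].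
unfold Lred_bound.
replace (2 / 3 / 2 + 2 * (u - 1) / ((u + 1) * 2)
  - (2 * u - 1) / (2 + 1) * ((6 * u + 1) / (u * (6 * u + 4)))
  + (2 * u - 1) / (2 * (2 + 1)) * (2 / (2 * 2 * u - 1)))
  with ((u * (u + 1) * (6 * u + 4) * (4 * u - 1) + 3 * (u - 1) * u * (6 * u + 4) * (4 * u - 1)
         - (2 * u - 1) * (6 * u + 1) * (u + 1) * (4 * u - 1)
         + (2 * u - 1) * u * (u + 1) * (6 * u + 4))
        / (3 * u * (u + 1) * (6 * u + 4) * (4 * u - 1))) by (field; lra).
apply Rdiv_lt_0_compat; [| repeat apply Rmult_lt_0_compat; lra].
set (t := u - 1). replace u with (1 + t) by (unfold t; ring).
assert (0 <= t) by (unfold t; lra). ring_simplify. nra.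
Qed.

Lemma Lred_pos_k3 (u : R) : 1 <= u -> 0 < Lred 3 u.
Proof.
intros Hu.
assert (Hln3 : 1 <= ln 3).
{ replace 3 with (1 + 2) by ring. assert (H := ln_1p_lower 2 ltac:(lra)). lra. }
apply Rlt_le_trans with (Lred_bound 3 1 u); [| apply Lred_lower_bound; lra].
unfold Lred_bound.
replace (1 / 3 + 2 * (u - 1) / ((u + 1) * 3)
  - (3 * u - 1) / (3 + 1) * ((6 * u + 1) / (u * (6 * u + 4)))
  + (3 * u - 1) / (3 * (3 + 1)) * (2 / (2 * 3 * u - 1)))
  with ((4 * u * (u + 1) * (6 * u + 4) * (6 * u - 1) + 8 * (u - 1) * u * (6 * u + 4) * (6 * u - 1)
         - 3 * (3 * u - 1) * (6 * u + 1) * (u + 1) * (6 * u - 1)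
         + 2 * (3 * u - 1) * u * (u + 1) * (6 * u + 4))
        / (12 * u * (u + 1) * (6 * u + 4) * (6 * u - 1))) by (field; lra).
apply Rdiv_lt_0_compat; [| repeat apply Rmult_lt_0_compat; lra].
set (t := u - 1). replace u with (1 + t) by (unfold t; ring).
assert (0 <= t) by (unfold t; lra). ring_simplify. nra.
Qed.

Theorem lemma6p1 :
  (forall (s : nat), (s = 2 \/ s = 3 \/ s = 4)%nat ->
     forall r : R, 2 < r -> 0 < L s r) /\
  (forall (s : nat), (s = 3 \/ s = 4)%nat -> 0 < L s 2).
Proof.
assert (L3 : forall r, 2 <= r -> 0 < L 3 r).
{ intros r Hr. rewrite L_eq_Lred; simpl INR; try lra.
  replace (1 + 1 + 1 - 1) with 2 by ring. apply Lred_pos_k2; lra. }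
assert (L4 : forall r, 2 <= r -> 0 < L 4 r).
{ intros r Hr. rewrite L_eq_Lred; simpl INR; try lra.
  replace (1 + 1 + 1 + 1 - 1) with 3 by ring. apply Lred_pos_k3; lra. }
split.
- intros s [-> | [-> | ->]] r Hr; [| apply L3; lra | apply L4; lra].
  rewrite L_eq_Lred; simpl INR; try lra.
  replace (1 + 1 - 1) with 1 by ring. apply Lred_pos_k1; lra.
- intros s [-> | ->]; [apply L3 | apply L4]; lra.
Qed.
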